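(* Let $N\ge2$, $a\ge0$, and let $(X_t)_{t\ge0}$ be the continuous-time Markov chain on $\{0,1,\dots,N\}$ with transitions $j\to j-1$ at rate $j$ and $j\to j+1$ at rate $a\,\frac{j(j-1)(N-j)}{N(N-1)}$, started from $X_0=N$. For $j=1,\dots,N$ let $\tau_j=\int_0^\infty P(X_t=j\mid X_0=N)\,dt$. Then $$\sum_{j=1}^N j\,\tau_j \le \sum_{j=1}^N\sum_{i=0}^j (a/4)^i.$$
   Context: The chain $X_t$ is the number of individuals in a single patch of the contact process with sexual reproduction in the absence of migrations (outer birth parameter $b=0$); $\tau_j$ is the expected total time spent in state $j$. *)

From HB Require Import structures.
From mathcomp Require Import all_boot all_order all_algebra.
From mathcomp Require Import all_classical all_reals all_analysis.
Set Implicit Arguments. Unset Strict Implicit. Unset Printing Implicit Defensive.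
Import Order.TTheory GRing.Theory Num.Theory.
Local Open Scope ring_scope.

Definition birth_rate (R : realType) (N : nat) (a : R) (j : nat) : R :=
  a * (j * j.-1 * (N - j))%:R / (N * N.-1)%:R.

Definition generator (R : realType) (N : nat) (a : R) : 'M[R]_N.+1 :=
  \matrix_(i < N.+1, j < N.+1)
    if (j : nat).+1 == i then (i : nat)%:R
    else if (j : nat) == (i : nat).+1 then birth_rate N a i
    else if i == j then - ((i : nat)%:R + birth_rate N a i)
    else 0.

(* Transition function of the finite-state CTMC: P(t) = exp(t Q),
   defined entrywise by the exponential series sum_k t^k/k! (Q^k)_{ij}. *)
Definition trans_prob (R : realType) (N : nat) (a : R) (t : R) (i j : 'I_N.+1) : R :=
  limn (fun n : nat => \sum_(k < n) (t ^+ k / (k`!)%:R) * ((generator N a) ^+ k) i j).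

Definition occupation_time (R : realType) (N : nat) (a : R) (j : nat) : \bar R :=
  (\int[lebesgue_measure]_(t in `[0%R, +oo[%classic)
      (@trans_prob R N a t ord_max (inord j))%:E)%E.

(* The function h(j) = sum_(k=1..j) sum_(i=0..N+1-k) (a/4)^i is a Lyapunov
   function for the chain: its increments d(k) = h(k) - h(k-1) satisfy
   d(l) = 1 + (a/4) d(l+1), and the birth rate at l is at most (a/4) l by AM-GM,
   so (Q h)(l) = - l d(l) + birth(l) d(l+1) <= -l.  With P(t) = exp(t Q), which
   is nonnegative since Q has nonnegative off-diagonal entries, the forward
   equation gives d/dt (P(t) h)_N = (P(t) Q h)_N <= - sum_l l P_Nl(t).
   Integrating over [0, T] and using P(T) h >= 0 bounds sum_j j tau_j by
   h(N), which is the right-hand side after reindexing. *)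

From HB Require Import structures.
From mathcomp Require Import all_boot all_order all_algebra.
From mathcomp Require Import all_classical all_reals all_analysis.
From mathcomp Require Import ring lra zify.
From mathcomp Require Import measurable_realfun.
Set Implicit Arguments. Unset Strict Implicit. Unset Printing Implicit Defensive.
Import Order.TTheory GRing.Theory Num.Theory.
Import numFieldNormedType.Exports.
Local Open Scope classical_set_scope.
Local Open Scope ring_scope.

Section MatrixExponential.
Variables (R : realType) (n : nat).
Implicit Types (A : 'M[R]_n.+1) (i j : 'I_n.+1).

(* Coefficients of the p-th derivative of the series t |-> (exp (t A)) i j. *)
Definition mexp_coef A i j (p k : nat) : R := (A ^+ (k + p)) i j / k`!%:R.

Definition mexp A (t : R) i j : R := limn (pseries (mexp_coef A i j 0) t).

Definition mnorm A : R := \sum_i \sum_j `|A i j|.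

Lemma mnorm_ge0 A : 0 <= mnorm A.
Proof. by apply: sumr_ge0 => i _; apply: sumr_ge0. Qed.

Lemma col_norm_le_mnorm A j : \sum_l `|A l j| <= mnorm A.
Proof. by apply: ler_sum => l _; rewrite (bigD1 j) //= lerDl sumr_ge0. Qed.

Lemma norm_entry_le_mnorm A i j : `|A i j| <= mnorm A.
Proof.
apply: le_trans (col_norm_le_mnorm A j).
by rewrite (bigD1 i) //= lerDl sumr_ge0.
Qed.

Lemma norm_mxpow_le A k i j : `|(A ^+ k) i j| <= mnorm A ^+ k.
Proof.
elim: k i j => [|k IH] i j.
  by rewrite expr0 mxE; case: (i == j); rewrite ?normr1 ?normr0.
rewrite exprSr mxE; apply: (le_trans (ler_norm_sum _ _ _)).
apply: (@le_trans _ _ (\sum_l mnorm A ^+ k * `|A l j|)).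
  by apply: ler_sum => l _; rewrite normrM ler_wpM2r.
by rewrite -mulr_sumr exprSr ler_wpM2l ?exprn_ge0 ?mnorm_ge0 ?col_norm_le_mnorm.
Qed.

Lemma is_cvg_pseries_exp_bound (c : nat -> R) (C M x : R) :
  0 <= M -> (forall k, `|c k| <= C * (M ^+ k / k`!%:R)) -> cvgn (pseries c x).
Proof.
move=> M0 hc.
have C0 : 0 <= C by have := hc 0%N; rewrite expr0 fact0 divr1 mulr1; apply: le_trans.
apply: normed_cvg; apply: (@series_le_cvg _ _ (C *: exp_coeff (M * `|x|))).
- by move=> k /=.
- by move=> k /=; rewrite mulr_ge0 ?divr_ge0 ?exprn_ge0 ?mulr_ge0.
- move=> k /=; rewrite normrM normrX !fctE /exp_coeff /= exprMn.
  rewrite (_ : C *: _ = C * (M ^+ k / k`!%:R) * `|x| ^+ k); last by rewrite /GRing.scale /=; ring.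
  by rewrite ler_wpM2r ?exprn_ge0 // hc.
- exact: is_cvg_seriesZ (is_cvg_series_exp_coeff _).
Qed.

Lemma pseries_diffs_mexp_coef A i j p :
  pseries_diffs (mexp_coef A i j p) = mexp_coef A i j p.+1.
Proof.
apply/funext => k; rewrite /pseries_diffs /mexp_coef addSnnS factS natrM.
by field; rewrite addrC natr1 !pnatr_eq0 -lt0n fact_gt0.
Qed.

Lemma is_cvg_pseries_mexp_coef A i j p t : cvgn (pseries (mexp_coef A i j p) t).
Proof.
apply: (@is_cvg_pseries_exp_bound _ (mnorm A ^+ p) _ _ (mnorm_ge0 A)) => k.
rewrite /mexp_coef normrM normfV normr_nat mulrA (mulrC (mnorm A ^+ p)) -exprD.
by rewrite ler_wpM2r ?invr_ge0 // norm_mxpow_le.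
Qed.

Lemma mexp_partial_sumsE A t i j :
  limn (fun m => \sum_(k < m) (t ^+ k / k`!%:R) * (A ^+ k) i j) = mexp A t i j.
Proof.
congr (lim (_ @ \oo)); apply/funext => m; rewrite /pseries /series /=.
elim: m => [|m IH]; first by rewrite big_ord0 big_geq.
by rewrite big_ord_recr big_nat_recr //= IH /mexp_coef addn0; congr (_ + _); ring.
Qed.

Lemma mexp0 A i j : mexp A 0 i j = (i == j)%:R.
Proof.
apply: cvg_lim => //; apply: cvg_near_cst; exists 1%N => // m /= m_gt0.
rewrite /pseries /series /= (big_ltn m_gt0) big_add1 big1 ?addr0.
  by rewrite /mexp_coef expr0 mulr1 fact0 divr1 expr0 mxE.
by move=> k _; rewrite expr0n mulr0.
Qed.

Lemma is_derive_mexp A i j t :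
  is_derive t (1 : R) (fun s => mexp A s i j) (\sum_l mexp A t i l * A l j).
Proof.
have -> : \sum_l mexp A t i l * A l j = limn (pseries (mexp_coef A i j 1) t).
  apply/esym/cvg_lim => //.
  have -> : pseries (mexp_coef A i j 1) t =
      (fun m => \sum_l pseries (mexp_coef A i l 0) t m * A l j).
    apply/funext => m; rewrite /pseries /series /=.
    under [RHS]eq_bigr do rewrite mulr_suml.
    rewrite exchange_big /=; apply: eq_bigr => k _.
    rewrite /mexp_coef addn1 addn0 exprSr mxE !mulr_suml.
    by apply: eq_bigr => l _; ring.
  apply: (cvg_big add_continuous) => l _; apply: cvgMr_tmp.
  exact: is_cvg_pseries_mexp_coef.
rewrite /mexp -pseries_diffs_mexp_coef.
apply: (@pseries_snd_diffs _ _ (`|t| + 1));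
  rewrite ?pseries_diffs_mexp_coef; try exact: is_cvg_pseries_mexp_coef.
by rewrite [ltRHS]ger0_norm ?addr_ge0 // ltrDl.
Qed.

Lemma continuous_mexp A i j : continuous (fun s => mexp A s i j).
Proof.
by move=> t; case: (is_derive_mexp A i j t) => /derivable1_diffP/differentiable_continuous.
Qed.

Lemma is_derive_mexp_weighted A i (c : 'I_n.+1 -> R) t :
  is_derive t (1 : R) (fun s => \sum_j mexp A s i j * c j)
    (\sum_l mexp A t i l * \sum_j A l j * c j).
Proof.
have := is_derive_sum (fun j => is_deriveM (is_derive_mexp A i j t) (is_derive_cst (c j) t 1)).
rewrite fct_sumE => d; apply: is_derive_eq d _.
under eq_bigr do rewrite /GRing.scale /= mulr0 add0r mulr_sumr.
rewrite exchange_big /=; apply: eq_bigr => l _; rewrite mulr_sumr.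
by apply: eq_bigr => j _; rewrite mulrCA (mulrC (c j)).
Qed.

Lemma continuous_mexp_weighted A i (c : 'I_n.+1 -> R) :
  continuous (fun s => \sum_j mexp A s i j * c j).
Proof.
move=> t; apply/differentiable_continuous/derivable1_diffP.
by case: (is_derive_mexp_weighted A i c t).
Qed.

Lemma mexp_ge0 A t i j : (forall l k, 0 <= A l k) -> 0 <= t -> 0 <= mexp A t i j.
Proof.
move=> A_ge0 t_ge0.
have Ak_ge0 k l m : 0 <= (A ^+ k) l m.
  elim: k l m => [|k IH] l m; first by rewrite expr0 mxE; case: (_ == _).
  by rewrite exprSr mxE; apply: sumr_ge0 => *; apply: mulr_ge0.
apply: limr_ge; first exact: is_cvg_pseries_mexp_coef.
apply: nearW => m; apply: sumr_ge0 => k _.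
by rewrite /mexp_coef mulr_ge0 ?divr_ge0 ?exprn_ge0.
Qed.

End MatrixExponential.

Lemma is_derive_expR_scale (R : realType) (k x : R) :
  is_derive x (1 : R) (fun t => expR (k * t)) (k * expR (k * x)).
Proof.
have dk : is_derive x (1 : R) (fun t : R => k * t) k.
  by have := is_deriveZ k (is_derive_id x (1 : R)); rewrite /GRing.scale /= mulr1.
have d : derivable (fun t => expR (k * t)) x 1.
  apply/derivable1_diffP.
  apply: (@differentiable_comp _ _ _ _ (fun t : R => k * t) expR).
    by apply/derivable1_diffP; case: dk.
  exact/derivable1_diffP/derivable_expR.
apply: DeriveDef => //.
rewrite -derive1E (@derive1_comp _ (fun t : R => k * t) expR).
- by rewrite derive1E derive_val derive1E derive_val mulrC.
- by case: dk.
- exact: derivable_expR.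
Qed.

Section LinearODE.
Variables (R : realType) (n : nat) (B : 'M[R]_n.+1).
Hypothesis B_ge0 : forall l j, 0 <= B l j.

Lemma quad_form_le (d : 'I_n.+1 -> R) :
  \sum_j d j * (\sum_l d l * B l j) <= (\sum_l \sum_j B l j) * \sum_j d j ^+ 2.
Proof.
set S := \sum_j d j ^+ 2.
have sqr_le_S j : d j ^+ 2 <= S.
  by rewrite /S (bigD1 j) //= lerDl sumr_ge0 // => l _; rewrite sqr_ge0.
rewrite mulr_suml; under [leRHS]eq_bigr do rewrite mulr_suml.
rewrite [leRHS]exchange_big /=; apply: ler_sum => j _.
rewrite mulr_sumr; apply: ler_sum => l _.
have hj := sqr_le_S j; have hl := sqr_le_S l.
have dd_le_S : d j * d l <= S by nra.
by rewrite mulrA [leRHS]mulrC ler_wpM2r.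
Qed.

(* Uniqueness for x' = x B: the energy e^{-2Lt} |x(t)|^2, with L the sum of the
   entries of B, is nonincreasing, by the quadratic form bound above. *)
Lemma linear_ode_eq0 (x : 'I_n.+1 -> R -> R) :
  (forall j t, is_derive t (1 : R) (x j) (\sum_l x l t * B l j)) ->
  (forall j, x j 0 = 0) -> forall j t, 0 <= t -> x j t = 0.
Proof.
move=> dx x0 j t t_ge0.
set L := \sum_l \sum_j B l j.
pose S s := \sum_k x k s ^+ 2.
pose u s := expR (- (2 * L) * s) * S s.
have du s : is_derive s (1 : R) u
    (expR (- (2 * L) * s) * (\sum_k 2 * x k s * (\sum_l x l s * B l k))
     + S s * (- (2 * L) * expR (- (2 * L) * s))).
  apply: is_deriveM; first exact: is_derive_expR_scale.
  have := is_derive_sum (fun k => is_deriveX 2 (dx k s)).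
  by rewrite fct_sumE; under eq_bigr do rewrite expr1 /GRing.scale /=.
have du_le0 s : derive1 u s <= 0.
  have := du s; rewrite derive1E => dus; rewrite derive_val.
  have E_gt0 := expR_gt0 (- (2 * L) * s).
  have := quad_form_le (fun k => x k s); rewrite -/L -/(S s) => q.
  rewrite (_ : \sum_k _ = 2 * \sum_k x k s * (\sum_l x l s * B l k)); last first.
    by rewrite mulr_sumr; apply: eq_bigr => k _; rewrite mulrA.
  nra.
have ut_le_u0 : u t <= u 0.
  have u_derivable s : derivable u s 1 by case: (du s).
  apply: (@ler0_derive1_nincry _ u 0) => //.
  exact: derivable_within_continuous.
have St_eq0 : S t = 0.
  have S_ge0 : 0 <= S t by apply: sumr_ge0 => k _; apply: sqr_ge0.
  have u0 : u 0 = 0 by rewrite /u /S big1 ?mulr0 // => k _; rewrite x0 expr0n.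
  apply/eqP; rewrite eq_le S_ge0 andbT -(pmulr_rle0 _ (expR_gt0 (- (2 * L) * t))).
  by rewrite -u0.
move/(psumr_eq0P (fun k _ => sqr_ge0 (x k t))): St_eq0 => /(_ j isT).
by move/eqP; rewrite sqrf_eq0 => /eqP.
Qed.

End LinearODE.

Lemma sum_mul_add_scalar_mx (R : comPzRingType) n (x : 'I_n.+1 -> R) (Q : 'M[R]_n.+1) c k :
  \sum_l x l * (Q + c%:M) l k = \sum_l x l * Q l k + x k * c.
Proof.
under eq_bigr do rewrite mxE mulrDr; rewrite big_split /=; congr (_ + _).
rewrite (bigD1 k) //= mxE eqxx mulr1n big1 ?addr0 // => l /negbTE lk.
by rewrite mxE lk mulr0n mulr0.
Qed.

(* exp (t Q) is nonnegative for a matrix Q with nonnegative off-diagonal entries: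
   with c = mnorm Q, the matrix Q + c is nonnegative and exp (t Q) = e^{-ct} exp (t (Q + c)),
   the latter identity because both sides solve the same linear ODE. *)
Lemma mexp_metzler_ge0 (R : realType) n (Q : 'M[R]_n.+1) t i j :
  (forall l k, l != k -> 0 <= Q l k) -> 0 <= t -> 0 <= mexp Q t i j.
Proof.
move=> Q_ge0 t_ge0.
set c := mnorm Q; set B := Q + c%:M.
have B_ge0 l k : 0 <= B l k.
  rewrite !mxE; have [<-|lk] := eqVneq l k; last by rewrite mulr0n addr0 Q_ge0.
  rewrite mulr1n -lerBlDr sub0r lerNl.
  by apply: le_trans (norm_entry_le_mnorm Q l l); rewrite -normrN ler_norm.
pose x k s := expR (c * s) * mexp Q s i k - mexp B s i k.
have x_eq0 : x j t = 0.
  apply: (linear_ode_eq0 B_ge0) => // [k s|k]; last first.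
    by rewrite /x !mexp0 mulr0 expR0 mul1r subrr.
  apply: is_derive_eq.
    exact: is_deriveB (is_deriveM (is_derive_expR_scale c s) (is_derive_mexp Q i k s))
                      (is_derive_mexp B i k s).
  rewrite /x; under [RHS]eq_bigr do rewrite mulrBl.
  rewrite sumrB /GRing.scale /=; congr (_ - _).
  rewrite sum_mul_add_scalar_mx mulr_sumr; congr (_ + _); last by ring.
  by apply: eq_bigr => l _; rewrite mulrA.
have H_ge0 : 0 <= mexp B t i j by apply: mexp_ge0.
move/eqP: x_eq0; rewrite subr_eq0 => /eqP x_eq.
by rewrite -(pmulr_rge0 _ (expR_gt0 (c * t))) x_eq.
Qed.

Section LyapunovFunction.
Variables (R : realType) (r : R) (N : nat).
Hypothesis r_ge0 : 0 <= r.

Definition geom_sum (m : nat) : R := \sum_(0 <= i < m.+1) r ^+ i.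

Definition lyapunov (j : nat) : R := \sum_(1 <= k < j.+1) geom_sum (N.+1 - k).

Lemma geom_sum_ge1 m : 1 <= geom_sum m.
Proof.
rewrite /geom_sum big_nat_recl //= expr0 lerDl.
by apply: sumr_ge0 => i _; apply: exprn_ge0.
Qed.

Lemma geom_sumS m : geom_sum m.+1 = 1 + r * geom_sum m.
Proof.
rewrite /geom_sum big_nat_recl //= expr0 mulr_sumr; congr (_ + _).
by apply: eq_bigr => i _; rewrite exprS.
Qed.

Lemma lyapunovS j : lyapunov j.+1 = lyapunov j + geom_sum (N - j).
Proof. by rewrite /lyapunov big_nat_recr // subSS. Qed.

Lemma lyapunov_ge0 j : 0 <= lyapunov j.
Proof. by apply: sumr_ge0 => k _; apply: le_trans (geom_sum_ge1 _). Qed.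

Lemma lyapunov_top : lyapunov N = \sum_(1 <= j < N.+1) \sum_(0 <= i < j.+1) r ^+ i.
Proof.
rewrite [RHS]big_nat_rev; apply: eq_big_nat => k /andP[k_ge1 k_le].
by congr geom_sum; lia.
Qed.

End LyapunovFunction.

Section BirthDeathGenerator.
Variables (R : realType) (N : nat) (a : R).
Local Notation Q := (generator N a).
Local Notation lam := (birth_rate N a).

Lemma birth_rate0 : lam 0 = 0.
Proof. by rewrite /birth_rate !mul0n mulr0 mul0r. Qed.

Lemma birth_rate_top : lam N = 0.
Proof. by rewrite /birth_rate subnn muln0 mulr0 mul0r. Qed.

Lemma generator_entry (l j : 'I_N.+1) :
  Q l j = ((j : nat).+1 == l)%:R * (l : nat)%:R + ((j : nat) == (l : nat).+1)%:R * lam l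
          - (l == j)%:R * ((l : nat)%:R + lam l).
Proof.
rewrite mxE.
case: eqP => e1; case: eqP => e2; case: eqP => e3; try subst;
  try (exfalso; lia); by rewrite /= ?mul1r ?mul0r ?subr0 ?addr0 ?add0r ?sub0r.
Qed.

Lemma sum_ord_indicator (k : nat) (f : nat -> R) :
  \sum_(j < N.+1) ((j : nat) == k)%:R * f j = if (k < N.+1)%N then f k else 0.
Proof.
case: ifP => k_lt.
  rewrite (bigD1 (Ordinal k_lt)) //= eqxx mul1r big1 ?addr0 // => j jk.
  rewrite (_ : (j : nat) == k = false) ?mul0r //.
  by apply: contraNF jk => /eqP jk; apply/eqP/val_inj.
apply: big1 => j _; rewrite (_ : (j : nat) == k = false) ?mul0r //.
by apply: contraFF k_lt => /eqP <-.
Qed.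

Hypothesis a_ge0 : 0 <= a.

Lemma birth_rate_ge0 k : 0 <= lam k.
Proof. by rewrite /birth_rate divr_ge0 ?mulr_ge0. Qed.

(* AM-GM: (l - 1) (N - l) <= (N - 1)^2 / 4 <= N (N - 1) / 4.  For N <= 1 the
   denominator N (N - 1) vanishes, and so does the rate, as x / 0 = 0. *)
Lemma birth_rate_le l : (l <= N)%N -> lam l <= a / 4 * l%:R.
Proof.
case: l => [_|l l_le]; first by rewrite birth_rate0 mulr0.
have [N_le1|N_ge2] := leqP N 1.
  rewrite /birth_rate (_ : N.-1 = 0)%N ?muln0 ?invr0 ?mulr0 ?mulr_ge0 ?divr_ge0 //.
  by lia.
have NN1_gt0 : 0 < (N * N.-1)%:R :> R by rewrite ltr0n muln_gt0; apply/andP; split; lia.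
rewrite /birth_rate ler_pdivrMr //= !natrM.
set x : R := l%:R; set y : R := (N - l.+1)%:R.
have x_ge0 : 0 <= x by rewrite ler0n.
have y_ge0 : 0 <= y by rewrite ler0n.
have NE : N%:R = x + y + 1 :> R by rewrite /x /y -natrD natr1; congr _%:R; lia.
have N1E : N.-1%:R = x + y :> R by rewrite /x /y -natrD; congr _%:R; lia.
rewrite NE N1E (_ : l.+1%:R = x + 1); last by rewrite /x natr1.
have amgm : 4 * (x * y) <= (x + y + 1) * (x + y) by have := sqr_ge0 (x - y); nra.
have c_ge0 : 0 <= a * (x + 1) / 4 by rewrite divr_ge0 ?mulr_ge0 ?addr_ge0.
rewrite -subr_ge0 in amgm; have := mulr_ge0 c_ge0 amgm.
lra.
Qed.

Lemma generator_offdiag_ge0 (l j : 'I_N.+1) : l != j -> 0 <= Q l j.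
Proof.
move=> /negbTE lj; rewrite generator_entry lj mul0r subr0.
by rewrite addr_ge0 ?mulr_ge0 ?birth_rate_ge0.
Qed.

Lemma generator_sum (l : 'I_N.+1) (f : nat -> R) :
  \sum_j Q l j * f j = (l : nat)%:R * (f (l : nat).-1 - f l) + lam l * (f (l : nat).+1 - f l).
Proof.
under eq_bigr do rewrite generator_entry mulrBl mulrDl.
rewrite sumrB big_split /=.
under eq_bigr do rewrite mulrAC.
under [X in _ + X - _]eq_bigr do rewrite mulrAC.
under [X in _ - X]eq_bigr do rewrite mulrAC.
rewrite -!mulr_suml.
have -> : \sum_(j < N.+1) (l == j)%:R * f j = f l.
  rewrite (bigD1 l) //= eqxx mul1r big1 ?addr0 // => j /negbTE.
  by rewrite eq_sym => ->; rewrite mul0r.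
case: l => [[|l] l_lt] /=.
  by rewrite birth_rate0; ring.
under eq_bigr do rewrite eqSS.
rewrite !sum_ord_indicator ltnW //.
case: ltnP => [_|l_top]; first ring.
have -> : l.+1 = N by lia.
by rewrite birth_rate_top; ring.
Qed.

Lemma generator_lyapunov (l : 'I_N.+1) :
  \sum_j Q l j * lyapunov (a / 4) N j <= - (l : nat)%:R.
Proof.
have r_ge0 : 0 <= a / 4 by rewrite divr_ge0.
rewrite generator_sum lyapunovS addrAC subrr add0r.
have -> : (l : nat)%:R * (lyapunov (a / 4) N (l : nat).-1 - lyapunov (a / 4) N l)
    = - ((l : nat)%:R * (1 + a / 4 * geom_sum (a / 4) (N - l))).
  case: l => [[|l] l_lt] /=; first by rewrite !mul0r oppr0.
  by rewrite lyapunovS -geom_sumS (_ : (N - l.+1).+1 = N - l)%N; [ring | lia].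
have := birth_rate_le (ltnSE (ltn_ord l)).
have := geom_sum_ge1 r_ge0 (N - l); have := ler0n R l.
nra.
Qed.

End BirthDeathGenerator.

Lemma measurable_fun_EFin_continuous (R : realType) (g : R -> R) (D : set R) :
  measurable D -> continuous g -> measurable_fun D (fun x : R => (g x)%:E).
Proof.
move=> mD cg; apply/measurable_EFinP.
exact: measurable_funS (@subsetT _ D) (continuous_measurable_fun cg).
Qed.

Section IntegralBound.
Variables (R : realType) (f F F' : R -> R).
Hypotheses (f_cont : continuous f) (F'_cont : continuous F').
Hypothesis F'_deriv : forall x, is_derive x (1 : R) F (F' x).
Hypotheses (f_ge0 : forall x, 0 <= x -> 0 <= f x) (f_le : forall x, 0 <= x -> f x <= - F' x).
Hypothesis F_ge0 : forall x, 0 <= x -> 0 <= F x.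

Lemma integral_itv_cc_le_of_derive (T : R) : 0 < T ->
  (\int[lebesgue_measure]_(x in `[0%R, T]) (f x)%:E <= (F 0)%:E)%E.
Proof.
move=> T_gt0; have mI : measurable `[0%R, T] by exact: measurable_itv.
apply: (@le_trans _ _ (\int[lebesgue_measure]_(x in `[0%R, T]) (- F' x)%:E)%E).
  apply: ge0_le_integral => //.
  - by move=> x; rewrite /= in_itv /= lee_fin => /andP[x_ge0 _]; apply: f_ge0.
  - exact: measurable_fun_EFin_continuous.
  - by apply: measurable_fun_EFin_continuous => // x; apply/continuousN/F'_cont.
  - by move=> x; rewrite /= in_itv /= lee_fin => /andP[x_ge0 _]; apply: f_le.
have dNF x : is_derive x (1 : R) (fun y => - F y) (- F' x) by apply: is_deriveN.
rewrite (@continuous_FTC2 R (fun x => - F' x) (fun y => - F y) 0%R T T_gt0).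
- by rewrite -EFinB lee_fin; have := F_ge0 (ltW T_gt0); lra.
- by apply: continuous_subspaceT => x; apply/continuousN/F'_cont.
- split.
  + by move=> x _; case: (dNF x).
  + by apply: cvg_at_right_filter; case: (dNF 0%R) => /derivable1_diffP/differentiable_continuous.
  + by apply: cvg_at_left_filter; case: (dNF T) => /derivable1_diffP/differentiable_continuous.
- by move=> x _; have := dNF x; rewrite derive1E => dx; apply: derive_val.
Qed.

Lemma integral_itv_cy_le_of_derive :
  (\int[lebesgue_measure]_(x in `[0%R, +oo[) (f x)%:E <= (F 0)%:E)%E.
Proof.
pose I n := (`[0%R, n.+1%:R]%classic : set (measurableTypeR R)).
have I_cup : \bigcup_n I n = `[0%R, +oo[%classic.
  apply/seteqP; split => x /=.
    by case=> n _; rewrite /I /= !in_itv /= => /andP[-> _].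
  rewrite in_itv /= andbT => x_ge0; exists (Num.truncn x) => //.
  by rewrite /I /= in_itv /= x_ge0 ltW // truncnS_gt.
rewrite -I_cup; apply: (cvge_to_le (@ge0_nondecreasing_set_cvg_integral _ (measurableTypeR R) _ I
  (fun x => (f x)%:E) lebesgue_measure _ _ _ _)).
- by move=> m k mk; rewrite subsetEset; apply: subset_itvl; rewrite bnd_simp ler_nat.
- by move=> m; exact: measurable_itv.
- by move=> m; apply: measurable_fun_EFin_continuous => //; exact: measurable_itv.
- by move=> m x; rewrite /I /= in_itv /= lee_fin => /andP[x_ge0 _]; apply: f_ge0.
- by apply: nearW => m; apply: integral_itv_cc_le_of_derive.
Qed.

End IntegralBound.

Section BirthDeathOccupation.
Variables (R : realType) (N : nat) (a : R).
Hypothesis a_ge0 : 0 <= a.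
Local Notation Q := (generator N a).

Lemma trans_probE t (i j : 'I_N.+1) : @trans_prob R N a t i j = mexp Q t i j.
Proof. exact: mexp_partial_sumsE. Qed.

Lemma mexp_generator_ge0 t (i j : 'I_N.+1) : 0 <= t -> 0 <= mexp Q t i j.
Proof. by apply: mexp_metzler_ge0 => l k; apply: generator_offdiag_ge0. Qed.

Lemma weighted_occupation_timeE :
  (\sum_(1 <= j < N.+1) j%:R%:E * occupation_time N a j =
   \int[lebesgue_measure]_(t in `[0%R, +oo[)
     (\sum_(j < N.+1) mexp Q t ord_max j * (j : nat)%:R)%:E)%E.
Proof.
have mI : measurable (`[0%R, +oo[%classic : set (measurableTypeR R)) by exact: measurable_itv.
pose g (j : 'I_N.+1) t := mexp Q t ord_max j * (j : nat)%:R.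
have g_cont j : continuous (g j).
  by move=> t; apply: cvgMr_tmp; exact: continuous_mexp.
have g_ge0 j t : 0 <= t -> 0 <= g j t by move=> t_ge0; rewrite mulr_ge0 ?mexp_generator_ge0.
transitivity (\sum_(0 <= j < N.+1) j%:R%:E * occupation_time N a j)%E.
  by rewrite [RHS]big_ltn // mul0e add0e.
rewrite big_mkord; under eq_integral do rewrite -sumEFin.
rewrite ge0_integral_sum //; last 2 first.
- by move=> j; exact: (measurable_fun_EFin_continuous mI (g_cont j)).
- by move=> j t; rewrite /= in_itv /= andbT lee_fin; apply: g_ge0.
apply: eq_bigr => j _; rewrite /occupation_time -ge0_integralZl_EFin //; last 2 first.
- by move=> t; rewrite /= in_itv /= andbT lee_fin trans_probE; apply: mexp_generator_ge0.
- rewrite [X in measurable_fun _ X](_ : _ = fun t => (mexp Q t ord_max (inord j))%:E).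
    exact: measurable_fun_EFin_continuous mI (@continuous_mexp _ _ Q ord_max (inord j)).
  by apply/funext => t; rewrite trans_probE.
by apply: eq_integral => t _; rewrite trans_probE inord_val mulrC.
Qed.

End BirthDeathOccupation.

Theorem lemma5p1 (R : realType) (N : nat) (a : R) (hN : (2 <= N)%N) (ha : 0 <= a) :
  (\sum_(1 <= j < N.+1) (j%:R)%:E * occupation_time N a j
    <= (\sum_(1 <= j < N.+1) \sum_(0 <= i < j.+1) (a / 4) ^+ i)%:E)%E.
Proof.
set Q := generator N a; set h := lyapunov (a / 4) N.
pose P t j := mexp Q t ord_max j.
have h_top : \sum_j P 0 j * h j = h N.
  rewrite (bigD1 ord_max) //= /P mexp0 eqxx mul1r big1 ?addr0 // => j /negbTE jN.
  by rewrite mexp0 eq_sym jN mul0r.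
rewrite (weighted_occupation_timeE N ha) -lyapunov_top -/h -h_top.
apply: (@integral_itv_cy_le_of_derive _ _ (fun t => \sum_j P t j * h j)
          (fun t => \sum_l P t l * \sum_j Q l j * h j)).
- exact: continuous_mexp_weighted.
- exact: continuous_mexp_weighted.
- by move=> t; apply: is_derive_mexp_weighted.
- by move=> t t_ge0; apply: sumr_ge0 => j _; rewrite mulr_ge0 ?mexp_generator_ge0.
- move=> t t_ge0; rewrite -sumrN; apply: ler_sum => l _.
  by rewrite -mulrN ler_wpM2l ?mexp_generator_ge0 // lerNr generator_lyapunov.
- by move=> t t_ge0; apply: sumr_ge0 => j _; rewrite mulr_ge0 ?mexp_generator_ge0 ?lyapunov_ge0 ?divr_ge0.
Qed.
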